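(* Let $k\ge 1$, let $\alpha=\alpha(t,x,x_1)$, $\beta=\beta(t,x,x_1)$, $\gamma^{(1)}=\gamma^{(1)}(t,x,x_1)$ be smooth with $\beta-\alpha x_1\neq 0$, and let $\tau^{(k)}=\alpha\partial_t+\beta\partial_x+\sum_{i=1}^k\gamma^{(i)}\partial_{x_i}$ be the telescopic vector field with $\gamma^{(i)}$, $2\le i\le k$, defined by $$\gamma^{(i)}=D_t(\gamma^{(i-1)})-D_t(\alpha)x_i+\frac{\gamma^{(1)}+x_1D_t\alpha-D_t\beta}{\beta-x_1\alpha}\big(\gamma^{(i-1)}-\alpha x_i\big).$$ Then, as derivations acting on functions of $(t,x,x_1,\ldots,x_{k-1})$, $$[\tau^{(k)},D_t]=\lambda\,\tau^{(k)}+\mu\,D_t,\qquad \lambda=\frac{\gamma^{(1)}+x_1D_t\alpha-D_t\beta}{\beta-x_1\alpha},\quad \mu=-(D_t+\lambda)(\alpha).$$ Consequently, the coefficients of $\tau^{(k)}$ satisfy the $\lambda$-prolongation recurrence for this $\lambda$ (which depends on $(t,x,x_1,x_2)$), i.e. formally $\tau^{(k)}=(\alpha\partial_t+\beta\partial_x)^{[\lambda,(k)]}$.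
   Context: Jet coordinates $(t,x,x_1,x_2,\ldots)$, $x_i=d^ix/dt^i$; $D_t=\partial_t+x_1\partial_x+x_2\partial_{x_1}+\cdots$ the total derivative. For functions $\rho,\phi^0,\lambda$ possibly depending on finitely many jet variables, the formal $\lambda$-prolongation $(\rho\partial_t+\phi^0\partial_x)^{[\lambda,(k)]}=\rho\partial_t+\phi^0\partial_x+\sum_{i=1}^k\phi^{[\lambda,(i)]}\partial_{x_i}$ is defined by $\phi^{[\lambda,(0)]}=\phi^0$ and $\phi^{[\lambda,(i)]}=D_t(\phi^{[\lambda,(i-1)]})-D_t(\rho)x_i+\lambda(\phi^{[\lambda,(i-1)]}-\rho x_i)$. *)

From Stdlib Require Import Reals Lra ClassicalEpsilon.
Open Scope R_scope.

(* A point of the jet space is (t, s) with s 0 = x and s i = x_i = d^i x/dt^i.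
   A (jet) function is a real function of such points. *)
Definition JFun := R -> (nat -> R) -> R.

Definition upd (s : nat -> R) (i : nat) (u : R) : nat -> R :=
  fun j => if Nat.eqb j i then u else s j.

Definition depends_upto (N : nat) (f : JFun) : Prop :=
  forall t s s', (forall i, (i <= N)%nat -> s i = s' i) -> f t s = f t s'.

(* partial derivatives d/dt and d/dx_i (chosen classically; meaningful where they exist) *)
Definition pt (f : JFun) : JFun := fun t s =>
  epsilon (inhabits 0) (fun l => derivable_pt_lim (fun u => f u s) t l).
Definition px (i : nat) (f : JFun) : JFun := fun t s =>
  epsilon (inhabits 0) (fun l => derivable_pt_lim (fun u => f t (upd s i u)) (s i) l).

(* total derivative D_t = d_t + x_1 d_x + x_2 d_{x_1} + ... (formal series, as a limit of partial sums) *)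
Definition Dt (f : JFun) : JFun := fun t s =>
  pt f t s + epsilon (inhabits 0)
    (fun l => Un_cv (fun n => sum_f_R0 (fun i => s (S i) * px i f t s) n) l).

(* continuity on jet space (product topology) *)
Definition jcont (f : JFun) : Prop :=
  forall t s eps, 0 < eps -> exists N delta, 0 < delta /\
    forall t' s', Rabs (t' - t) < delta ->
      (forall i, (i <= N)%nat -> Rabs (s' i - s i) < delta) ->
      Rabs (f t' s' - f t s) < eps.

Fixpoint Ck (n : nat) (f : JFun) : Prop :=
  jcont f /\
  match n with
  | O => True
  | S m =>
      (forall t s, exists l, derivable_pt_lim (fun u => f u s) t l) /\
      (forall i t s, exists l, derivable_pt_lim (fun u => f t (upd s i u)) (s i) l) /\
      Ck m (pt f) /\ (forall i, Ck m (px i f))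
  end.

Definition smooth (f : JFun) : Prop :=
  (exists N, depends_upto N f) /\ forall n, Ck n f.

Definition lam (al be ga1 : JFun) : JFun := fun t s =>
  (ga1 t s + s 1%nat * Dt al t s - Dt be t s) / (be t s - s 1%nat * al t s).

Definition mu (al be ga1 : JFun) : JFun := fun t s =>
  - (Dt al t s + lam al be ga1 t s * al t s).

(* telescopic coefficients gamma^(i): gamma^(1) given, gamma^(i) for i >= 2 by recursion.
   (index 0 is set to beta, unused by tau) *)
Fixpoint tgam (al be ga1 : JFun) (i : nat) : JFun :=
  match i with
  | O => be
  | S j =>
      match j with
      | O => ga1
      | S _ => fun t s =>
          Dt (tgam al be ga1 j) t s - Dt al t s * s i
          + lam al be ga1 t s * (tgam al be ga1 j t s - al t s * s i)
      end
  end.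

Definition tau (k : nat) (al be ga1 : JFun) (f : JFun) : JFun := fun t s =>
  al t s * pt f t s + be t s * px 0 f t s
  + sum_f_R0 (fun j => tgam al be ga1 (S j) t s * px (S j) f t s) (k - 1).

(* lambda-prolongation coefficients phi^[lambda,(i)] of rho d_t + phi0 d_x *)
Fixpoint prolong (l rho phi0 : JFun) (i : nat) : JFun :=
  match i with
  | O => phi0
  | S j => fun t s =>
      Dt (prolong l rho phi0 j) t s - Dt rho t s * s i
      + l t s * (prolong l rho phi0 j t s - rho t s * s i)
  end.

(* The proof separates the analysis from the algebra.
   - Analytic layer: partial derivatives pt, px i on jet space obey the usual
     sum, product and quotient rules; smoothness (C^n for all n) and finite
     dependence are closed under these operations; for a function depending on
     x_0..x_N the formal series D_t is the finite sum
     pt + sum_{i<=N} x_{i+1} px_i (Dt_form), so D_t is a derivation, and by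
     Schwarz's theorem it commutes with pt and satisfies
     px_j D_t = D_t px_j + px_{j-1}.
   - From these commutation rules, for any vector field
     X = a pt + sum_{j<=K+1} g_j px_j and f depending on x_0..x_K,
     [X, D_t] f = - D_t(a) pt f + sum_{j<=K} (g_{j+1} - D_t g_j) px_j f.
   - For tau^(k) the coefficients satisfy the lambda-prolongation recurrence
     g_{j+1} - D_t g_j = - D_t(a) x_{j+1} + lambda (g_j - a x_{j+1})
     (for j = 0 this is the definition of lambda), and a telescoping
     rearrangement turns the formula above into lambda tau f + mu D_t f. *)
From Stdlib Require Import Reals Lra Lia FunctionalExtensionality ClassicalEpsilon.
From Coquelicot Require Import Coquelicot.
Open Scope R_scope.

Ltac fext := let t := fresh "t" in let s := fresh "s" in
  apply functional_extensionality; intro t; apply functional_extensionality; intro s.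

Lemma upd_same s i u : upd s i u i = u.
Proof. unfold upd. now rewrite Nat.eqb_refl. Qed.

Lemma upd_other s i u j : j <> i -> upd s i u j = s j.
Proof. intro H. unfold upd. destruct (Nat.eqb_spec j i); [contradiction | reflexivity]. Qed.

Lemma upd_upd s i v w : upd (upd s i v) i w = upd s i w.
Proof. apply functional_extensionality; intro m. unfold upd. now destruct (Nat.eqb m i). Qed.

Lemma upd_id s i : upd s i (s i) = s.
Proof.
  apply functional_extensionality; intro m. unfold upd.
  destruct (Nat.eqb_spec m i); subst; reflexivity.
Qed.

Lemma upd_swap s i j u v z : i <> j -> upd (upd (upd s j u) i v) j z = upd (upd s j z) i v.
Proof.
  intro H. apply functional_extensionality; intro m. unfold upd.
  destruct (Nat.eqb_spec m j), (Nat.eqb_spec m i); subst; try lia; reflexivity.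
Qed.

Definition DT (f : JFun) : Prop :=
  forall t s, exists l, derivable_pt_lim (fun u => f u s) t l.
Definition DX (f : JFun) : Prop :=
  forall i t s, exists l, derivable_pt_lim (fun u => f t (upd s i u)) (s i) l.

Lemma pt_eq f t s l : derivable_pt_lim (fun u => f u s) t l -> pt f t s = l.
Proof.
  intro H. unfold pt.
  apply (uniqueness_limite (fun u => f u s) t); [| exact H].
  exact (epsilon_spec (inhabits 0) (fun l => derivable_pt_lim (fun u => f u s) t l)
           (ex_intro _ l H)).
Qed.

Lemma px_eq i f t s l :
  derivable_pt_lim (fun u => f t (upd s i u)) (s i) l -> px i f t s = l.
Proof.
  intro H. unfold px.
  apply (uniqueness_limite (fun u => f t (upd s i u)) (s i)); [| exact H].
  exact (epsilon_spec (inhabits 0)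
           (fun l => derivable_pt_lim (fun u => f t (upd s i u)) (s i) l) (ex_intro _ l H)).
Qed.

Lemma pt_lim f t s : DT f -> derivable_pt_lim (fun u => f u s) t (pt f t s).
Proof. intro H. destruct (H t s) as [l Hl]. now rewrite (pt_eq _ _ _ _ Hl). Qed.

Lemma px_lim i f t s : DX f -> derivable_pt_lim (fun u => f t (upd s i u)) (s i) (px i f t s).
Proof. intro H. destruct (H i t s) as [l Hl]. now rewrite (px_eq _ _ _ _ _ Hl). Qed.

Lemma px_lim_gen i f t p (q : R -> nat -> R) z0 :
  DX f -> (forall z, upd p i z = q z) -> p i = z0 ->
  derivable_pt_lim (fun z => f t (q z)) z0 (px i f t p).
Proof.
  intros H Hq <-.
  replace (fun z => f t (q z)) with (fun z => f t (upd p i z))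
    by (apply functional_extensionality; intro z; now rewrite Hq).
  now apply px_lim.
Qed.

Lemma px_dep_zero N f i t s : depends_upto N f -> (N < i)%nat -> px i f t s = 0.
Proof.
  intros H Hi. apply px_eq.
  replace (fun u => f t (upd s i u)) with (fct_cte (f t s)).
  - apply derivable_pt_lim_const.
  - apply functional_extensionality; intro u. apply H. intros m Hm.
    symmetry. apply upd_other. lia.
Qed.

Definition fc (c : R) : JFun := fun _ _ => c.
Definition fpr (i : nat) : JFun := fun _ s => s i.
Definition fadd (f g : JFun) : JFun := fun t s => f t s + g t s.
Definition fmul (f g : JFun) : JFun := fun t s => f t s * g t s.
Definition finv (f : JFun) : JFun := fun t s => / f t s.
Definition fsum (F : nat -> JFun) (N : nat) : JFun := fun t s => sum_f_R0 (fun i => F i t s) N.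
Definition nz (f : JFun) : Prop := forall t s, f t s <> 0.

Lemma derivable_pt_lim_coord s i j :
  derivable_pt_lim (fun u => upd s i u j) (s i) (if Nat.eqb j i then 1 else 0).
Proof.
  destruct (Nat.eqb_spec j i) as [-> | Hji].
  - replace (fun u => upd s i u i) with id
      by (apply functional_extensionality; intro u; now rewrite upd_same).
    apply derivable_pt_lim_id.
  - replace (fun u => upd s i u j) with (fct_cte (s j))
      by (apply functional_extensionality; intro u; now rewrite upd_other).
    apply derivable_pt_lim_const.
Qed.

Lemma derivable_pt_lim_inv (h : R -> R) x l : h x <> 0 -> derivable_pt_lim h x l ->
  derivable_pt_lim (fun u => / h u) x (-1 * (l * (/ h x * / h x))).
Proof.
  intros Hn H.
  pose proof (derivable_pt_lim_div (fct_cte 1) h x 0 l (derivable_pt_lim_const 1 x) H Hn) as H2.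
  replace (fct_cte 1 / h)%F with (fun u => / h u) in H2
    by (apply functional_extensionality; intro u; unfold div_fct, fct_cte, Rdiv; ring).
  replace (-1 * (l * (/ h x * / h x))) with ((0 * h x - l * fct_cte 1 x) / (h x)²)
    by (unfold fct_cte, Rsqr; field; auto).
  exact H2.
Qed.

Lemma pt_c c : pt (fc c) = fc 0.
Proof. fext. apply pt_eq, derivable_pt_lim_const. Qed.

Lemma px_c i c : px i (fc c) = fc 0.
Proof. fext. apply px_eq, derivable_pt_lim_const. Qed.

Lemma pt_pr i : pt (fpr i) = fc 0.
Proof. fext. apply pt_eq, derivable_pt_lim_const. Qed.

Lemma px_pr i j : px j (fpr i) = fc (if Nat.eqb i j then 1 else 0).
Proof. fext. apply px_eq, derivable_pt_lim_coord. Qed.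

Lemma pt_add f g : DT f -> DT g -> pt (fadd f g) = fadd (pt f) (pt g).
Proof.
  intros Hf Hg. fext. apply pt_eq.
  apply (derivable_pt_lim_plus (fun u => f u s) (fun u => g u s)); now apply pt_lim.
Qed.

Lemma px_add i f g : DX f -> DX g -> px i (fadd f g) = fadd (px i f) (px i g).
Proof.
  intros Hf Hg. fext. apply px_eq.
  apply (derivable_pt_lim_plus (fun u => f t (upd s i u)) (fun u => g t (upd s i u)));
    now apply px_lim.
Qed.

Lemma pt_mul f g : DT f -> DT g -> pt (fmul f g) = fadd (fmul (pt f) g) (fmul f (pt g)).
Proof.
  intros Hf Hg. fext. apply pt_eq.
  exact (derivable_pt_lim_mult (fun u => f u s) (fun u => g u s) t _ _
           (pt_lim f t s Hf) (pt_lim g t s Hg)).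
Qed.

Lemma px_mul i f g : DX f -> DX g -> px i (fmul f g) = fadd (fmul (px i f) g) (fmul f (px i g)).
Proof.
  intros Hf Hg. fext. apply px_eq.
  pose proof (derivable_pt_lim_mult (fun u => f t (upd s i u)) (fun u => g t (upd s i u))
                (s i) _ _ (px_lim i f t s Hf) (px_lim i g t s Hg)) as H.
  unfold mult_fct in H. now rewrite upd_id in H.
Qed.

Lemma pt_inv f : nz f -> DT f ->
  pt (finv f) = fmul (fc (-1)) (fmul (pt f) (fmul (finv f) (finv f))).
Proof.
  intros Hn Hf. fext. apply pt_eq.
  apply (derivable_pt_lim_inv (fun u => f u s)); [apply Hn | now apply pt_lim].
Qed.

Lemma px_inv i f : nz f -> DX f ->
  px i (finv f) = fmul (fc (-1)) (fmul (px i f) (fmul (finv f) (finv f))).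
Proof.
  intros Hn Hf. fext. apply px_eq.
  pose proof (derivable_pt_lim_inv (fun u => f t (upd s i u)) (s i) _ (Hn _ _)
                (px_lim i f t s Hf)) as H.
  cbv beta in H. now rewrite upd_id in H.
Qed.

Lemma DT_c c : DT (fc c).
Proof. intros t s. exists 0. apply derivable_pt_lim_const. Qed.

Lemma DX_c c : DX (fc c).
Proof. intros i t s. exists 0. apply derivable_pt_lim_const. Qed.

Lemma DT_pr i : DT (fpr i).
Proof. intros t s. exists 0. apply derivable_pt_lim_const. Qed.

Lemma DX_pr j : DX (fpr j).
Proof. intros i t s. eexists. apply derivable_pt_lim_coord. Qed.

Lemma DT_add f g : DT f -> DT g -> DT (fadd f g).
Proof.
  intros Hf Hg t s. eexists.
  apply (derivable_pt_lim_plus (fun u => f u s) (fun u => g u s)); now apply pt_lim.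
Qed.

Lemma DX_add f g : DX f -> DX g -> DX (fadd f g).
Proof.
  intros Hf Hg i t s. eexists.
  apply (derivable_pt_lim_plus (fun u => f t (upd s i u)) (fun u => g t (upd s i u)));
    now apply px_lim.
Qed.

Lemma DT_mul f g : DT f -> DT g -> DT (fmul f g).
Proof.
  intros Hf Hg t s. eexists.
  apply (derivable_pt_lim_mult (fun u => f u s) (fun u => g u s)); now apply pt_lim.
Qed.

Lemma DX_mul f g : DX f -> DX g -> DX (fmul f g).
Proof.
  intros Hf Hg i t s. eexists.
  apply (derivable_pt_lim_mult (fun u => f t (upd s i u)) (fun u => g t (upd s i u)));
    now apply px_lim.
Qed.

Lemma DT_inv f : nz f -> DT f -> DT (finv f).
Proof.
  intros Hn Hf t s. eexists.
  apply (derivable_pt_lim_inv (fun u => f u s)); [apply Hn | now apply pt_lim].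
Qed.

Lemma DX_inv f : nz f -> DX f -> DX (finv f).
Proof.
  intros Hn Hf i t s. eexists.
  apply (derivable_pt_lim_inv (fun u => f t (upd s i u))); [apply Hn | now apply px_lim].
Qed.

Lemma jcont_2d (h : R -> R -> R) f g : jcont f -> jcont g ->
  (forall t s, continuity_2d_pt h (f t s) (g t s)) -> jcont (fun t s => h (f t s) (g t s)).
Proof.
  intros Hf Hg Hh t s eps Heps.
  destruct (Hh t s (mkposreal eps Heps)) as [d Hd].
  destruct (Hf t s d (cond_pos d)) as [N1 [d1 [Hd1 H1]]].
  destruct (Hg t s d (cond_pos d)) as [N2 [d2 [Hd2 H2]]].
  exists (max N1 N2), (Rmin d1 d2). split; [now apply Rmin_pos |].
  intros t' s' Ht Hs. apply (Hd (f t' s') (g t' s')).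
  - apply H1; [apply Rlt_le_trans with (1 := Ht); apply Rmin_l |].
    intros i Hi. apply Rlt_le_trans with (1 := Hs i ltac:(lia)); apply Rmin_l.
  - apply H2; [apply Rlt_le_trans with (1 := Ht); apply Rmin_r |].
    intros i Hi. apply Rlt_le_trans with (1 := Hs i ltac:(lia)); apply Rmin_r.
Qed.

Lemma jcont_c c : jcont (fc c).
Proof.
  intros t s eps He. exists 0%nat, 1. split; [lra |].
  intros. unfold fc. now rewrite Rminus_eq_0, Rabs_R0.
Qed.

Lemma jcont_pr i : jcont (fpr i).
Proof. intros t s eps He. exists i, eps. split; [exact He |]. intros t1 s1 _ H. apply H. lia. Qed.

Lemma jcont_add f g : jcont f -> jcont g -> jcont (fadd f g).
Proof.
  intros. apply (jcont_2d (fun a b => a + b)); auto. intros.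
  apply continuity_2d_pt_plus; [apply continuity_2d_pt_id1 | apply continuity_2d_pt_id2].
Qed.

Lemma jcont_mul f g : jcont f -> jcont g -> jcont (fmul f g).
Proof.
  intros. apply (jcont_2d (fun a b => a * b)); auto. intros.
  apply continuity_2d_pt_mult; [apply continuity_2d_pt_id1 | apply continuity_2d_pt_id2].
Qed.

Lemma jcont_inv f : nz f -> jcont f -> jcont (finv f).
Proof.
  intros Hn H. apply (jcont_2d (fun a _ => / a) f f); auto. intros.
  apply continuity_2d_pt_inv; [apply continuity_2d_pt_id1 | apply Hn].
Qed.

Lemma Ck_mono n f : Ck (S n) f -> Ck n f.
Proof.
  revert f. induction n; intros f H; [simpl in *; tauto |].
  destruct H as [H0 [H1 [H2 [H3 H4]]]].
  refine (conj H0 (conj H1 (conj H2 (conj _ _)))); [apply IHn; auto | intro i; apply IHn; auto].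
Qed.

Lemma Ck_jcont n f : Ck n f -> jcont f.
Proof. destruct n; simpl; tauto. Qed.

Lemma Ck_DT n f : Ck (S n) f -> DT f.
Proof. simpl. unfold DT. tauto. Qed.

Lemma Ck_DX n f : Ck (S n) f -> DX f.
Proof. simpl. unfold DX. tauto. Qed.

Lemma Ck_pt n f : Ck (S n) f -> Ck n (pt f).
Proof. simpl. tauto. Qed.

Lemma Ck_px n i f : Ck (S n) f -> Ck n (px i f).
Proof. simpl. intros [_ [_ [_ [_ H]]]]. auto. Qed.

Lemma Ck_c n c : Ck n (fc c).
Proof.
  revert c. induction n; intro c; split; try apply jcont_c; auto.
  split; [apply DT_c |]. split; [apply DX_c |].
  rewrite pt_c. split; [auto |]. intro i. now rewrite px_c.
Qed.

Lemma Ck_pr n j : Ck n (fpr j).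
Proof.
  destruct n; split; try apply jcont_pr; auto.
  split; [apply DT_pr |]. split; [apply DX_pr |].
  rewrite pt_pr. split; [apply Ck_c |]. intro i. rewrite px_pr. apply Ck_c.
Qed.

Lemma Ck_add n f g : Ck n f -> Ck n g -> Ck n (fadd f g).
Proof.
  revert f g. induction n; intros f g Hf Hg.
  - split; [apply jcont_add; eapply Ck_jcont; eauto | exact I].
  - pose proof (Ck_DT _ _ Hf). pose proof (Ck_DT _ _ Hg).
    pose proof (Ck_DX _ _ Hf). pose proof (Ck_DX _ _ Hg).
    split; [apply jcont_add; eapply Ck_jcont; eauto |].
    split; [now apply DT_add |]. split; [now apply DX_add |].
    split; [rewrite pt_add; auto; apply IHn; now apply Ck_pt |].
    intro i. rewrite px_add; auto. apply IHn; now apply Ck_px.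
Qed.

Lemma Ck_mul n f g : Ck n f -> Ck n g -> Ck n (fmul f g).
Proof.
  revert f g. induction n; intros f g Hf Hg.
  - split; [apply jcont_mul; eapply Ck_jcont; eauto | exact I].
  - pose proof (Ck_DT _ _ Hf). pose proof (Ck_DT _ _ Hg).
    pose proof (Ck_DX _ _ Hf). pose proof (Ck_DX _ _ Hg).
    pose proof (Ck_mono _ _ Hf). pose proof (Ck_mono _ _ Hg).
    split; [apply jcont_mul; eapply Ck_jcont; eauto |].
    split; [now apply DT_mul |]. split; [now apply DX_mul |].
    split; [rewrite pt_mul; auto; apply Ck_add; apply IHn; auto; now apply Ck_pt |].
    intro i. rewrite px_mul; auto. apply Ck_add; apply IHn; auto; now apply Ck_px.
Qed.

Lemma Ck_inv n f : nz f -> Ck n f -> Ck n (finv f).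
Proof.
  intro Hn. revert f Hn. induction n; intros f Hn Hf.
  - split; [apply jcont_inv; auto; eapply Ck_jcont; eauto | exact I].
  - pose proof (Ck_DT _ _ Hf). pose proof (Ck_DX _ _ Hf).
    assert (Ci : Ck n (finv f)) by (apply IHn; auto; now apply Ck_mono).
    split; [apply jcont_inv; auto; eapply Ck_jcont; eauto |].
    split; [now apply DT_inv |]. split; [now apply DX_inv |].
    split.
    + rewrite pt_inv; auto.
      apply Ck_mul; [apply Ck_c | apply Ck_mul; [now apply Ck_pt | now apply Ck_mul]].
    + intro i. rewrite px_inv; auto.
      apply Ck_mul; [apply Ck_c | apply Ck_mul; [now apply Ck_px | now apply Ck_mul]].
Qed.

Lemma Ck_fsum n F N : (forall i, (i <= N)%nat -> Ck n (F i)) -> Ck n (fsum F N).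
Proof.
  induction N; intro H; [apply H; lia |].
  apply Ck_add; [apply IHN; intros; apply H; lia | apply H; lia].
Qed.

Definition Sm (f : JFun) : Prop := forall n, Ck n f.

Lemma Sm_DT f : Sm f -> DT f.
Proof. intro H. apply (Ck_DT 0), H. Qed.

Lemma Sm_DX f : Sm f -> DX f.
Proof. intro H. apply (Ck_DX 0), H. Qed.

Lemma Sm_pt f : Sm f -> Sm (pt f).
Proof. intros H n. apply Ck_pt, H. Qed.

Lemma Sm_px i f : Sm f -> Sm (px i f).
Proof. intros H n. apply Ck_px, H. Qed.

Lemma Sm_pr i : Sm (fpr i).
Proof. intro n. apply Ck_pr. Qed.

Lemma Sm_add f g : Sm f -> Sm g -> Sm (fadd f g).
Proof. intros Hf Hg n. now apply Ck_add. Qed.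

Lemma Sm_mul f g : Sm f -> Sm g -> Sm (fmul f g).
Proof. intros Hf Hg n. now apply Ck_mul. Qed.

Lemma Sm_scal c f : Sm f -> Sm (fmul (fc c) f).
Proof. intros Hf n. apply Ck_mul; [apply Ck_c | apply Hf]. Qed.

Lemma Sm_inv f : nz f -> Sm f -> Sm (finv f).
Proof. intros Hn Hf n. now apply Ck_inv. Qed.

Lemma Sm_fsum F N : (forall i, (i <= N)%nat -> Sm (F i)) -> Sm (fsum F N).
Proof. intros H n. apply Ck_fsum. intros i Hi. now apply H. Qed.

Lemma DT_fsum F N : (forall i, (i <= N)%nat -> DT (F i)) -> DT (fsum F N).
Proof.
  induction N; intro H; [apply H; lia |].
  apply DT_add; [apply IHN; intros; apply H; lia | apply H; lia].
Qed.

Lemma DX_fsum F N : (forall i, (i <= N)%nat -> DX (F i)) -> DX (fsum F N).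
Proof.
  induction N; intro H; [apply H; lia |].
  apply DX_add; [apply IHN; intros; apply H; lia | apply H; lia].
Qed.

Lemma pt_fsum F N : (forall i, (i <= N)%nat -> DT (F i)) ->
  pt (fsum F N) = fsum (fun i => pt (F i)) N.
Proof.
  induction N; intro H; [reflexivity |].
  change (pt (fadd (fsum F N) (F (S N))) = fadd (fsum (fun i => pt (F i)) N) (pt (F (S N)))).
  rewrite pt_add, IHN; auto. apply DT_fsum; intros; apply H; lia.
Qed.

Lemma px_fsum j F N : (forall i, (i <= N)%nat -> DX (F i)) ->
  px j (fsum F N) = fsum (fun i => px j (F i)) N.
Proof.
  induction N; intro H; [reflexivity |].
  change (px j (fadd (fsum F N) (F (S N))) = fadd (fsum (fun i => px j (F i)) N) (px j (F (S N)))).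
  rewrite px_add, IHN; auto. apply DX_fsum; intros; apply H; lia.
Qed.

Lemma dep_mono N N' f : (N <= N')%nat -> depends_upto N f -> depends_upto N' f.
Proof. intros H Hf t s s' E. apply Hf. intros; apply E; lia. Qed.

Lemma dep_c N c : depends_upto N (fc c).
Proof. intros t s s' E. reflexivity. Qed.

Lemma dep_pr N i : (i <= N)%nat -> depends_upto N (fpr i).
Proof. intros H t s s' E. now apply E. Qed.

Lemma dep_add N f g : depends_upto N f -> depends_upto N g -> depends_upto N (fadd f g).
Proof. intros Hf Hg t s s' E. unfold fadd. now rewrite (Hf t s s' E), (Hg t s s' E). Qed.

Lemma dep_mul N f g : depends_upto N f -> depends_upto N g -> depends_upto N (fmul f g).
Proof. intros Hf Hg t s s' E. unfold fmul. now rewrite (Hf t s s' E), (Hg t s s' E). Qed.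

Lemma dep_inv N f : depends_upto N f -> depends_upto N (finv f).
Proof. intros Hf t s s' E. unfold finv. now rewrite (Hf t s s' E). Qed.

Lemma dep_scal N c f : depends_upto N f -> depends_upto N (fmul (fc c) f).
Proof. intro Hf. apply dep_mul; [apply dep_c | exact Hf]. Qed.

Lemma dep_fsum N F M : (forall i, (i <= M)%nat -> depends_upto N (F i)) ->
  depends_upto N (fsum F M).
Proof.
  induction M; intro H; [apply H; lia |].
  apply dep_add; [apply IHM; intros; apply H; lia | apply H; lia].
Qed.

Lemma dep_pt N f : depends_upto N f -> depends_upto N (pt f).
Proof.
  intros Hf t s s' E. unfold pt.
  replace (fun u => f u s) with (fun u => f u s'); [reflexivity |].
  apply functional_extensionality; intro u. symmetry. now apply Hf.
Qed.

Lemma dep_px N i f : depends_upto N f -> depends_upto N (px i f).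
Proof.
  intros Hf t s s' E. destruct (Nat.le_gt_cases i N) as [Hi | Hi].
  - unfold px. rewrite (E i Hi).
    replace (fun u => f t (upd s i u)) with (fun u => f t (upd s' i u)); [reflexivity |].
    apply functional_extensionality; intro u. symmetry. apply Hf. intros m Hm. unfold upd.
    destruct (Nat.eqb m i); auto.
  - now rewrite (px_dep_zero N f i t s Hf Hi), (px_dep_zero N f i t s' Hf Hi).
Qed.

Lemma sum_stab (a : nat -> R) N n : (forall i, (N < i)%nat -> a i = 0) -> (N <= n)%nat ->
  sum_f_R0 a n = sum_f_R0 a N.
Proof.
  intro H. induction n; intro Hn.
  - now replace N with 0%nat by lia.
  - destruct (Nat.eq_dec N (S n)) as [-> | HN]; [reflexivity |].
    simpl. rewrite IHn, (H (S n)) by lia. ring.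
Qed.

Lemma Dt_form N g t s : depends_upto N g ->
  Dt g t s = pt g t s + sum_f_R0 (fun i => s (S i) * px i g t s) N.
Proof.
  intro Hg. unfold Dt. f_equal.
  set (u := fun n => sum_f_R0 (fun i => s (S i) * px i g t s) n).
  assert (Hc : Un_cv u (u N)).
  { intros eps He. exists N. intros n Hn. unfold u. rewrite (sum_stab _ N n); [| | lia].
    - unfold Rdist. now rewrite Rminus_diag, Rabs_R0.
    - intros i Hi. rewrite (px_dep_zero N g i t s Hg Hi). ring. }
  exact (UL_sequence _ _ _ (epsilon_spec (inhabits 0) (fun l => Un_cv u l) (ex_intro _ _ Hc)) Hc).
Qed.

Lemma Dt_fun N g : depends_upto N g ->
  Dt g = fadd (pt g) (fsum (fun i => fmul (fpr (S i)) (px i g)) N).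
Proof. intro H. fext. exact (Dt_form N g t s H). Qed.

Lemma Sm_Dt N g : depends_upto N g -> Sm g -> Sm (Dt g).
Proof.
  intros H Hg. rewrite (Dt_fun N g H). apply Sm_add; [now apply Sm_pt |].
  apply Sm_fsum. intros. apply Sm_mul; [apply Sm_pr | now apply Sm_px].
Qed.

Lemma dep_Dt N g : depends_upto N g -> depends_upto (S N) (Dt g).
Proof.
  intro H. rewrite (Dt_fun N g H). apply dep_add.
  - apply dep_pt. apply (dep_mono N); auto.
  - apply dep_fsum. intros. apply dep_mul; [apply dep_pr; lia |].
    apply dep_px. apply (dep_mono N); auto.
Qed.

Lemma schwarz_gen (F A B AB BA : R -> R -> R) x y :
  (forall u v, derivable_pt_lim (fun z => F z v) u (A u v)) ->
  (forall u v, derivable_pt_lim (fun z => F u z) v (B u v)) ->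
  (forall u v, derivable_pt_lim (fun z => B z v) u (AB u v)) ->
  (forall u v, derivable_pt_lim (fun z => A u z) v (BA u v)) ->
  continuity_2d_pt AB x y -> continuity_2d_pt BA x y -> AB x y = BA x y.
Proof.
  intros HA HB HAB HBA CAB CBA.
  assert (EB : forall u v, Derive (fun z => F u z) v = B u v)
    by (intros; apply is_derive_unique, is_derive_Reals, HB).
  assert (EA : forall u v, Derive (fun z => F z v) u = A u v)
    by (intros; apply is_derive_unique, is_derive_Reals, HA).
  assert (EAB : forall u v, Derive (fun z => Derive (fun w => F z w) v) u = AB u v).
  { intros. rewrite (Derive_ext _ (fun z => B z v)) by (intro; apply EB).
    apply is_derive_unique, is_derive_Reals, HAB. }
  assert (EBA : forall u v, Derive (fun z => Derive (fun w => F w z) u) v = BA u v).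
  { intros. rewrite (Derive_ext _ (fun z => A u z)) by (intro; apply EA).
    apply is_derive_unique, is_derive_Reals, HBA. }
  rewrite <- EAB, <- EBA. apply Schwarz.
  - exists (mkposreal 1 Rlt_0_1). intros u v _ _. split; [| split; [| split]].
    + exists (A u v). apply is_derive_Reals, HA.
    + exists (B u v). apply is_derive_Reals, HB.
    + exists (AB u v). apply (is_derive_ext (fun z => B z v)); [intro; symmetry; apply EB |].
      apply is_derive_Reals, HAB.
    + exists (BA u v). apply (is_derive_ext (fun z => A u z)); [intro; symmetry; apply EA |].
      apply is_derive_Reals, HBA.
  - apply continuity_2d_pt_ext with (f := AB); [intros; symmetry; apply EAB | exact CAB].
  - apply continuity_2d_pt_ext with (f := BA); [intros; symmetry; apply EBA | exact CBA].
Qed.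

Lemma jcont_cont2 g (T : R -> R -> R) (Q : R -> R -> nat -> R) x y :
  jcont g ->
  (forall d, 0 < d -> exists d', 0 < d' /\ forall u v, Rabs (u - x) < d' -> Rabs (v - y) < d' ->
     Rabs (T u v - T x y) < d /\ forall m, Rabs (Q u v m - Q x y m) < d) ->
  continuity_2d_pt (fun u v => g (T u v) (Q u v)) x y.
Proof.
  intros Hg H eps. destruct (Hg (T x y) (Q x y) eps (cond_pos eps)) as [N [d [Hd Hc]]].
  destruct (H d Hd) as [d' [Hd' H']]. exists (mkposreal d' Hd'). intros u v Hu Hv.
  destruct (H' u v Hu Hv) as [H1 H2]. apply Hc; auto.
Qed.

Lemma schwarz_t f i t s : Ck 2 f -> pt (px i f) t s = px i (pt f) t s.
Proof.
  intro Hf.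
  assert (DTf : DT f) by (eapply Ck_DT; eauto).
  assert (DXf : DX f) by (eapply Ck_DX; eauto).
  assert (Dpx : DT (px i f)) by (apply (Ck_DT 0), (Ck_px 1), Hf).
  assert (Dpt : DX (pt f)) by (apply (Ck_DX 0), (Ck_pt 1), Hf).
  assert (Cline : forall d, 0 < d -> exists d', 0 < d' /\ forall u v,
      Rabs (u - t) < d' -> Rabs (v - s i) < d' ->
      Rabs (u - t) < d /\ forall m, Rabs (upd s i v m - upd s i (s i) m) < d).
  { intros d Hd. exists d. split; [exact Hd |]. intros u v Hu Hv. split; [exact Hu |].
    intro m. unfold upd. destruct (Nat.eqb m i); [exact Hv |]. now rewrite Rminus_diag, Rabs_R0. }
  pose proof (schwarz_gen (fun u v => f u (upd s i v)) (fun u v => pt f u (upd s i v))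
    (fun u v => px i f u (upd s i v)) (fun u v => pt (px i f) u (upd s i v))
    (fun u v => px i (pt f) u (upd s i v)) t (s i)) as H.
  cbv beta in H. rewrite upd_id in H. apply H; clear H.
  - intros u v. now apply pt_lim.
  - intros u v. apply px_lim_gen; [exact DXf | intro z; apply upd_upd | apply upd_same].
  - intros u v. now apply pt_lim.
  - intros u v. apply px_lim_gen; [exact Dpt | intro z; apply upd_upd | apply upd_same].
  - apply (jcont_cont2 _ (fun u _ => u) (fun _ v => upd s i v)); [| exact Cline].
    apply (Ck_jcont 0), (Ck_pt 0), (Ck_px 1), Hf.
  - apply (jcont_cont2 _ (fun u _ => u) (fun _ v => upd s i v)); [| exact Cline].
    apply (Ck_jcont 0), (Ck_px 0), (Ck_pt 1), Hf.
Qed.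

Lemma schwarz_x f i j t s : Ck 2 f -> px i (px j f) t s = px j (px i f) t s.
Proof.
  intro Hf. destruct (Nat.eq_dec i j) as [-> | Hij]; [reflexivity |].
  assert (DXf : DX f) by (eapply Ck_DX; eauto).
  assert (Di : DX (px i f)) by (apply (Ck_DX 0), (Ck_px 1), Hf).
  assert (Dj : DX (px j f)) by (apply (Ck_DX 0), (Ck_px 1), Hf).
  assert (Hj : forall u v, upd (upd s j u) i v j = u)
    by (intros; rewrite upd_other, upd_same; auto).
  assert (Cplane : forall d, 0 < d -> exists d', 0 < d' /\ forall u v,
      Rabs (u - s j) < d' -> Rabs (v - s i) < d' ->
      Rabs (t - t) < d /\
      forall m, Rabs (upd (upd s j u) i v m - upd (upd s j (s j)) i (s i) m) < d).
  { intros d Hd. exists d. split; [exact Hd |]. intros u v Hu Hv.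
    split; [now rewrite Rminus_diag, Rabs_R0 |]. intro m. unfold upd.
    destruct (Nat.eqb m i); [exact Hv |]. destruct (Nat.eqb m j); [exact Hu |].
    now rewrite Rminus_diag, Rabs_R0. }
  pose proof (schwarz_gen (fun u v => f t (upd (upd s j u) i v))
    (fun u v => px j f t (upd (upd s j u) i v)) (fun u v => px i f t (upd (upd s j u) i v))
    (fun u v => px j (px i f) t (upd (upd s j u) i v))
    (fun u v => px i (px j f) t (upd (upd s j u) i v)) (s j) (s i)) as H.
  cbv beta in H. rewrite !upd_id in H. symmetry. apply H; clear H.
  - intros u v. apply px_lim_gen; auto. intro z. now apply upd_swap.
  - intros u v. apply px_lim_gen; [exact DXf | intro z; apply upd_upd | apply upd_same].
  - intros u v. apply px_lim_gen; auto. intro z. now apply upd_swap.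
  - intros u v. apply px_lim_gen; [exact Dj | intro z; apply upd_upd | apply upd_same].
  - apply (jcont_cont2 _ (fun _ _ => t) (fun u v => upd (upd s j u) i v)); [| exact Cplane].
    apply (Ck_jcont 0), (Ck_px 0), (Ck_px 1), Hf.
  - apply (jcont_cont2 _ (fun _ _ => t) (fun u v => upd (upd s j u) i v)); [| exact Cplane].
    apply (Ck_jcont 0), (Ck_px 0), (Ck_px 1), Hf.
Qed.

Lemma Dt_add N f g : Sm f -> Sm g -> depends_upto N f -> depends_upto N g ->
  Dt (fadd f g) = fadd (Dt f) (Dt g).
Proof.
  intros Sf Sg Df Dg. fext. unfold fadd at 2.
  rewrite !(Dt_form N) by (try apply dep_add; assumption).
  rewrite pt_add by (now apply Sm_DT).
  rewrite (sum_eq _ (fun i => s (S i) * px i f t s + s (S i) * px i g t s)).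
  - rewrite sum_plus. unfold fadd. ring.
  - intros i _. rewrite px_add by (now apply Sm_DX). unfold fadd. ring.
Qed.

Lemma Dt_mul N f g : Sm f -> Sm g -> depends_upto N f -> depends_upto N g ->
  Dt (fmul f g) = fadd (fmul (Dt f) g) (fmul f (Dt g)).
Proof.
  intros Sf Sg Df Dg. fext. unfold fadd at 1, fmul at 2 3.
  rewrite !(Dt_form N) by (try apply dep_mul; assumption).
  rewrite pt_mul by (now apply Sm_DT).
  rewrite (sum_eq _ (fun i => s (S i) * px i f t s * g t s + s (S i) * px i g t s * f t s)).
  - rewrite sum_plus, <- !scal_sum. unfold fadd, fmul. ring.
  - intros i _. rewrite px_mul by (now apply Sm_DX). unfold fadd, fmul. ring.
Qed.

Lemma Dt_fsum N F n : (forall i, (i <= n)%nat -> Sm (F i) /\ depends_upto N (F i)) ->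
  Dt (fsum F n) = fsum (fun i => Dt (F i)) n.
Proof.
  induction n; intro H; [reflexivity |].
  change (Dt (fadd (fsum F n) (F (S n))) = fadd (fsum (fun i => Dt (F i)) n) (Dt (F (S n)))).
  assert (HS : forall i, (i <= n)%nat -> Sm (F i) /\ depends_upto N (F i))
    by (intros i Hi; apply H; lia).
  rewrite (Dt_add N), IHn; auto.
  - apply Sm_fsum. intros i Hi. apply HS, Hi.
  - apply H; lia.
  - apply dep_fsum. intros i Hi. apply HS, Hi.
  - apply H; lia.
Qed.

Lemma delta_sum (c : nat -> R) j M :
  sum_f_R0 (fun i => if Nat.eqb i j then c i else 0) M = if Nat.leb j M then c j else 0.
Proof.
  induction M.
  - simpl. destruct j; reflexivity.
  - rewrite tech5, IHM.
    destruct (Nat.leb_spec j M), (Nat.eqb_spec (S M) j), (Nat.leb_spec j (S M));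
      try lia; subst; ring.
Qed.

Lemma pt_Dt N f : Sm f -> depends_upto N f -> pt (Dt f) = Dt (pt f).
Proof.
  intros Sf Df.
  assert (Dpx : forall i, (i <= N)%nat -> DT (fmul (fpr (S i)) (px i f)))
    by (intros; apply DT_mul; [apply DT_pr | now apply Sm_DT, Sm_px]).
  rewrite (Dt_fun N f Df), pt_add, pt_fsum; auto.
  - fext. unfold fadd, fsum. rewrite (Dt_form N (pt f)) by (now apply dep_pt).
    f_equal. apply sum_eq. intros i _.
    rewrite pt_mul, pt_pr by (try apply DT_pr; now apply Sm_DT, Sm_px).
    unfold fadd, fmul, fc, fpr. rewrite schwarz_t by apply Sf. ring.
  - now apply Sm_DT, Sm_pt.
  - now apply DT_fsum.
Qed.

Lemma px_Dt N j f t s : Sm f -> depends_upto N f ->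
  px j (Dt f) t s = Dt (px j f) t s + match j with O => 0 | S i => px i f t s end.
Proof.
  intros Sf Df. set (M := (N + j)%nat).
  assert (DfM : depends_upto M f) by (apply (dep_mono N); [lia | exact Df]).
  assert (Dpx : forall i, (i <= M)%nat -> DX (fmul (fpr (S i)) (px i f)))
    by (intros; apply DX_mul; [apply DX_pr | now apply Sm_DX, Sm_px]).
  rewrite (Dt_fun M f DfM), px_add, px_fsum; auto.
  2: now apply Sm_DX, Sm_pt.
  2: now apply DX_fsum.
  unfold fadd, fsum. rewrite (Dt_form M (px j f)) by (now apply dep_px).
  rewrite (sum_eq _ (fun i => s (S i) * px i (px j f) t s
                             + (if Nat.eqb (S i) j then px i f t s else 0))).
  - rewrite sum_plus, schwarz_t by apply Sf.
    enough (Hd : sum_f_R0 (fun i => if Nat.eqb (S i) j then px i f t s else 0) M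
                 = match j with O => 0 | S i => px i f t s end) by (rewrite Hd; ring).
    destruct j as [| j].
    + rewrite (sum_eq _ (fun _ => 0)), sum_cte by reflexivity. ring.
    + simpl Nat.eqb. rewrite (delta_sum (fun i => px i f t s)).
      destruct (Nat.leb_spec j M); [reflexivity | lia].
  - intros i _. rewrite px_mul, px_pr by (try apply DX_pr; now apply Sm_DX, Sm_px).
    unfold fadd, fmul, fc, fpr. rewrite (schwarz_x f j i) by apply Sf.
    destruct (Nat.eqb (S i) j); ring.
Qed.

Definition vfield (a : JFun) (g : nat -> JFun) (n : nat) (f : JFun) : JFun :=
  fadd (fmul a (pt f)) (fsum (fun j => fmul (g j) (px j f)) n).

Lemma vfield_truncate a g K f t s : depends_upto K f ->
  vfield a g (S K) f t s = a t s * pt f t s + sum_f_R0 (fun j => g j t s * px j f t s) K.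
Proof.
  intro Df. unfold vfield, fadd, fmul, fsum. rewrite tech5, (px_dep_zero K f (S K)); auto. ring.
Qed.

Lemma vfield_Dt_commutator M K a g f t s :
  Sm a -> depends_upto M a ->
  (forall j, (j <= S K)%nat -> Sm (g j) /\ depends_upto M (g j)) ->
  Sm f -> depends_upto K f -> (K <= M)%nat ->
  vfield a g (S K) (Dt f) t s - Dt (vfield a g (S K) f) t s
  = - Dt a t s * pt f t s + sum_f_R0 (fun j => (g (S j) t s - Dt (g j) t s) * px j f t s) K.
Proof.
  intros Sa Da Hg Sf Df HKM.
  assert (DfM : depends_upto M f) by (now apply (dep_mono K)).
  assert (Hterm : forall j, (j <= S K)%nat ->
            Sm (fmul (g j) (px j f)) /\ depends_upto M (fmul (g j) (px j f))).
  { intros j Hj. destruct (Hg j Hj) as [Sg Dg]. split.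
    - apply Sm_mul; [exact Sg | now apply Sm_px].
    - apply dep_mul; [exact Dg | now apply dep_px]. }
  assert (Dvf : Dt (vfield a g (S K) f) t s
     = Dt a t s * pt f t s + a t s * Dt (pt f) t s
       + sum_f_R0 (fun j => Dt (g j) t s * px j f t s + g j t s * Dt (px j f) t s) (S K)).
  { unfold vfield.
    rewrite (Dt_add M), (Dt_mul M), (Dt_fsum M); auto using Sm_pt, dep_pt.
    - unfold fadd at 1 2, fmul at 1 2, fsum. f_equal. apply sum_eq. intros j Hj.
      destruct (Hg j Hj) as [Sg Dg]. rewrite (Dt_mul M); auto using Sm_px, dep_px.
    - apply Sm_mul; auto using Sm_pt.
    - apply Sm_fsum. intros j Hj. apply Hterm, Hj.
    - apply dep_mul; auto using dep_pt.
    - apply dep_fsum. intros j Hj. apply Hterm, Hj. }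
  assert (VDf : vfield a g (S K) (Dt f) t s
     = a t s * Dt (pt f) t s
       + sum_f_R0 (fun j => g j t s * Dt (px j f) t s
                  + g j t s * match j with O => 0 | S i => px i f t s end) (S K)).
  { unfold vfield, fadd, fmul, fsum. rewrite (pt_Dt M); auto. f_equal.
    apply sum_eq. intros j _. rewrite (px_Dt M); auto. ring. }
  assert (Shift : sum_f_R0 (fun j => g j t s * match j with O => 0 | S i => px i f t s end) (S K)
                  = sum_f_R0 (fun j => g (S j) t s * px j f t s) K).
  { rewrite decomp_sum by lia. rewrite Rmult_0_r, Rplus_0_l. reflexivity. }
  assert (Stab : sum_f_R0 (fun j => Dt (g j) t s * px j f t s) (S K)
                 = sum_f_R0 (fun j => Dt (g j) t s * px j f t s) K).
  { rewrite tech5, (px_dep_zero K f (S K)); auto. ring. }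
  rewrite Dvf, VDf, !sum_plus, Shift, Stab.
  rewrite (sum_eq (fun j => (g (S j) t s - Dt (g j) t s) * px j f t s)
             (fun j => g (S j) t s * px j f t s - Dt (g j) t s * px j f t s)), minus_sum
    by (intros; ring).
  ring.
Qed.

(* The telescoping rearrangement: if the coefficients satisfy the
   lambda-prolongation recurrence, the commutator is  lambda X f + mu D_t f
   with mu = -(D_t a + lambda a). *)
Lemma prolongation_rearrange K (x g dg p : nat -> R) (a da pf lam : R) :
  (forall j, (j <= K)%nat -> g (S j) = dg j - da * x (S j) + lam * (g j - a * x (S j))) ->
  - da * pf + sum_f_R0 (fun j => (g (S j) - dg j) * p j) K
  = lam * (a * pf + sum_f_R0 (fun j => g j * p j) K)
    + - (da + lam * a) * (pf + sum_f_R0 (fun j => x (S j) * p j) K).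
Proof.
  intro Hrec. induction K as [| K IH].
  - simpl. rewrite Hrec by lia. ring.
  - rewrite !tech5, <- Rplus_assoc, IH by (intros; apply Hrec; lia).
    rewrite (Hrec (S K)) by lia. ring.
Qed.

Lemma lam_fun al be ga1 : lam al be ga1 =
  fmul (fadd ga1 (fadd (fmul (fpr 1) (Dt al)) (fmul (fc (-1)) (Dt be))))
       (finv (fadd be (fmul (fc (-1)) (fmul (fpr 1) al)))).
Proof. fext. unfold lam, fmul, fadd, finv, fc, fpr, Rdiv. f_equal; [ring | f_equal; ring]. Qed.

Section Telescopic.
Variables al be ga1 : JFun.
Hypothesis Sal : Sm al.
Hypothesis Sbe : Sm be.
Hypothesis Sga : Sm ga1.
Hypothesis Dal : depends_upto 1 al.
Hypothesis Dbe : depends_upto 1 be.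
Hypothesis Dga : depends_upto 1 ga1.
Hypothesis Hnz : forall t s, be t s - s 1%nat * al t s <> 0.

Lemma lam_smooth : Sm (lam al be ga1) /\ depends_upto 2 (lam al be ga1).
Proof.
  assert (DtA : Sm (Dt al) /\ depends_upto 2 (Dt al)) by (split; [apply (Sm_Dt 1) | apply dep_Dt]; auto).
  assert (DtB : Sm (Dt be) /\ depends_upto 2 (Dt be)) by (split; [apply (Sm_Dt 1) | apply dep_Dt]; auto).
  assert (Hden : nz (fadd be (fmul (fc (-1)) (fmul (fpr 1) al)))).
  { intros t s. unfold fadd, fmul, fc, fpr.
    replace (be t s + -1 * (s 1%nat * al t s)) with (be t s - s 1%nat * al t s) by ring. apply Hnz. }
  rewrite lam_fun. split.
  - apply Sm_mul; [| apply Sm_inv; [exact Hden |]].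
    + apply Sm_add; [exact Sga | apply Sm_add; [apply Sm_mul; [apply Sm_pr |] | apply Sm_scal]];
        apply DtA || apply DtB.
    + apply Sm_add; [exact Sbe | apply Sm_scal, Sm_mul; [apply Sm_pr | exact Sal]].
  - apply dep_mul; [| apply dep_inv].
    + apply dep_add; [apply (dep_mono 1); [lia | exact Dga] |].
      apply dep_add; [apply dep_mul; [apply dep_pr; lia | apply DtA] | apply dep_scal, DtB].
    + apply dep_add; [apply (dep_mono 1); [lia | exact Dbe] |].
      apply dep_scal, dep_mul; [apply dep_pr; lia | apply (dep_mono 1); [lia | exact Dal]].
Qed.

(* The coefficients of tau^(k) obey the lambda-prolongation recurrence,
   including for i = 1 where it is the definition of lambda. *)
Lemma tgam_recurrence j t s : tgam al be ga1 (S j) t s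
  = Dt (tgam al be ga1 j) t s - Dt al t s * s (S j)
    + lam al be ga1 t s * (tgam al be ga1 j t s - al t s * s (S j)).
Proof.
  destruct j as [| j]; [| reflexivity].
  simpl. unfold lam. field. apply Hnz.
Qed.

Lemma tgam_prolong i : tgam al be ga1 i = prolong (lam al be ga1) al be i.
Proof.
  induction i as [| i IH]; [reflexivity |].
  fext. rewrite tgam_recurrence. simpl prolong. now rewrite IH.
Qed.

Lemma tgam_smooth i : Sm (tgam al be ga1 i) /\ depends_upto (S i) (tgam al be ga1 i).
Proof.
  destruct lam_smooth as [SL DL].
  induction i as [| i [IH1 IH2]]; [now split |].
  replace (tgam al be ga1 (S i)) with
    (fadd (fadd (Dt (tgam al be ga1 i)) (fmul (fc (-1)) (fmul (Dt al) (fpr (S i)))))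
          (fmul (lam al be ga1) (fadd (tgam al be ga1 i) (fmul (fc (-1)) (fmul al (fpr (S i)))))))
    by (fext; rewrite tgam_recurrence; unfold fadd, fmul, fc, fpr; ring).
  split.
  - apply Sm_add; [apply Sm_add | apply Sm_mul; [exact SL | apply Sm_add]].
    + now apply (Sm_Dt (S i)).
    + apply Sm_scal, Sm_mul; [now apply (Sm_Dt 1) | apply Sm_pr].
    + exact IH1.
    + apply Sm_scal, Sm_mul; [exact Sal | apply Sm_pr].
  - apply dep_add; [apply dep_add | apply dep_mul; [apply (dep_mono 2); [lia | exact DL] | apply dep_add]].
    + now apply dep_Dt.
    + apply dep_scal, dep_mul; [apply (dep_mono 2); [lia | now apply dep_Dt] | apply dep_pr; lia].
    + apply (dep_mono (S i)); [lia | exact IH2].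
    + apply dep_scal, dep_mul; [apply (dep_mono 1); [lia | exact Dal] | apply dep_pr; lia].
Qed.

End Telescopic.

Lemma tau_vfield K al be ga1 h : tau (S K) al be ga1 h = vfield al (tgam al be ga1) (S K) h.
Proof.
  fext. unfold tau, vfield, fadd, fmul, fsum. replace (S K - 1)%nat with K by lia.
  rewrite (decomp_sum _ (S K)) by lia. simpl. ring.
Qed.

Theorem theorem2p3 (k : nat) (al be ga1 : JFun) :
  (1 <= k)%nat ->
  smooth al -> smooth be -> smooth ga1 ->
  depends_upto 1 al -> depends_upto 1 be -> depends_upto 1 ga1 ->
  (forall t s, be t s - s 1%nat * al t s <> 0) ->
  (forall f : JFun, smooth f -> depends_upto (k - 1) f ->
     forall t s,
       tau k al be ga1 (Dt f) t s - Dt (tau k al be ga1 f) t s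
       = lam al be ga1 t s * tau k al be ga1 f t s + mu al be ga1 t s * Dt f t s)
  /\ depends_upto 2 (lam al be ga1)
  /\ (forall i, (i <= k)%nat -> forall t s,
        tgam al be ga1 i t s = prolong (lam al be ga1) al be i t s).
Proof.
  intros Hk [_ Sa] [_ Sb] [_ Sg] Da Db Dg Hnz.
  split; [| split].
  - intros f [_ Sf] Df t s. destruct k as [| K]; [lia |].
    replace (S K - 1)%nat with K in Df by lia.
    rewrite !tau_vfield, (vfield_Dt_commutator (S (S K))), vfield_truncate, (Dt_form K f); auto.
    + unfold mu. apply (prolongation_rearrange K s (fun j => tgam al be ga1 j t s)
        (fun j => Dt (tgam al be ga1 j) t s) (fun j => px j f t s)).
      intros j _. now apply tgam_recurrence.
    + apply (dep_mono 1); [lia | exact Da].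
    + intros j Hj. destruct (tgam_smooth al be ga1 Sa Sb Sg Da Db Dg Hnz j) as [S1 D1].
      split; [exact S1 | apply (dep_mono (S j)); [lia | exact D1]].
  - now apply lam_smooth.
  - intros i _ t s. now rewrite tgam_prolong.
Qed.
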